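(* Let $m \geq 2$ be an integer and $n = m^2$. For $k = 0,1,\ldots,m-1$ let $u_k = e^{i 2 k \pi/m}$. For $\mathbf{t} = (t_0,t_1,\ldots,t_{m-2}) \in (\mathbb{C}\setminus\{0\})^{m-1}$ define the point $\mathbf{x}(\mathbf{t}) = (x_0,\ldots,x_{n-1}) \in \mathbb{C}^n$ by \[ x_{km+j} = u_k\, t_0 t_1 \cdots t_j \quad (j = 0,1,\ldots,m-2), \qquad x_{km+m-1} = u_k\, t_0^{-m+1} t_1^{-m+2} \cdots t_{m-3}^{-2} t_{m-2}^{-1}, \] for $k = 0,1,\ldots,m-1$ (so the exponent of $t_j$ in $x_{km+m-1}$ is $-(m-1-j)$). Let $S \subseteq \mathbb{C}^n$ be the Zariski closure of $\{\mathbf{x}(\mathbf{t}) : \mathbf{t} \in (\mathbb{C}\setminus\{0\})^{m-1}\}$, an $(m-1)$-dimensional algebraic set. Then the degree of $S$ equals $m$.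
   Context: The degree of an algebraic set $S \subseteq \mathbb{C}^n$ of dimension $d$ is the number of points in the intersection of $S$ with $d$ hyperplanes with generic (random) complex coefficients. *)

From HB Require Import structures.
From mathcomp Require Import all_boot all_order all_algebra.
From mathcomp Require Import classical_sets reals trigo.
From mathcomp Require Import complex.
From mathcomp Require Import mpoly.
Set Implicit Arguments. Unset Strict Implicit. Unset Printing Implicit Defensive.
Import Order.TTheory GRing.Theory Num.Theory.
Local Open Scope ring_scope.

Definition zariski_closure (C : comNzRingType) (n : nat) (X : set 'rV[C]_n)
  : set 'rV[C]_n :=
  [set y | forall p : {mpoly C[n]},
     (forall x, X x -> meval (fun i => x 0 i) p = 0) ->
     meval (fun i => y 0 i) p = 0].

Definition hyperplane (C : comNzRingType) (n : nat) (c : 'rV[C]_n.+1)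
  : set 'rV[C]_n :=
  [set x | \sum_(i < n) c 0 (widen_ord (leqnSn n) i) * x 0 i + c 0 ord_max = 0].

Definition has_exactly (C : comNzRingType) (n : nat) (A : set 'rV[C]_n) (k : nat)
  : Prop :=
  exists s : seq 'rV[C]_n, [/\ uniq s, size s = k & forall x, A x <-> x \in s].

(* Degree of an algebraic set S of dimension d: for d hyperplanes with generic
   coefficients (the rows of M : 'M_(d, n+1)), S meets their intersection in
   exactly k points.  "Generic" = outside the zero set of some nonzero
   polynomial in the d*(n+1) coefficients. *)
Definition degree_is (C : comNzRingType) (n : nat) (S : set 'rV[C]_n) (d k : nat)
  : Prop :=
  exists P : {mpoly C[d * n.+1]}, P != 0 /\
    forall M : 'M[C]_(d, n.+1),
      meval (fun l => mxvec M 0 l) P != 0 ->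
      has_exactly (S `&` [set x | forall j : 'I_d, hyperplane (row j M) x]) k.

Definition root_u (R : realType) (m k : nat) : R[i] :=
  let a : R := (2 * pi * k%:R / m%:R) in Complex (cos a) (sin a).

Definition xpt (R : realType) (m : nat) (t : 'I_(m.-1) -> R[i]) : 'rV[R[i]]_(m * m) :=
  \row_(i < m * m)
    let k := (i %/ m)%N in let j := (i %% m)%N in
    if (j < m.-1)%N then root_u R m k * \prod_(l < m.-1 | (l <= j)%N) t l
    else root_u R m k * \prod_(l < m.-1) (t l) ^- (m.-1 - l)%N.

Definition S_m (R : realType) (m : nat) : set 'rV[R[i]]_(m * m) :=
  zariski_closure [set y | exists t : 'I_(m.-1) -> R[i],
                              (forall l, t l != 0) /\ y = xpt t].

From HB Require Import structures.
From mathcomp Require Import all_boot all_order all_algebra all_field.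
From mathcomp Require Import classical_sets reals trigo.
From mathcomp Require Import complex.
From mathcomp Require Import mpoly.
From mathcomp Require Import zify boolp.
Set Implicit Arguments. Unset Strict Implicit. Unset Printing Implicit Defensive.
Import Order.TTheory GRing.Theory Num.Theory.
Local Open Scope ring_scope.

(* A point of S is determined by its first block y = (x_0, ..., x_(m-1)), since
   x_(km+j) = u_k x_j, and S is the torus of such points with y_0 ... y_(m-1) = 1:
   this set is Zariski closed and the monomial map t |-> x(t) is onto it.  On the
   torus the m - 1 hyperplanes become linear equations in y; when the minor of the
   columns of y_1, ..., y_(m-1) is invertible, Cramer's rule makes each y_j an affine
   function of y_0, and y_0 ... y_(m-1) = 1 becomes an equation of degree m in y_0.
   The intersection has m points as soon as the minor, the leading coefficient of
   that equation and its resultant with its derivative are nonzero.  These are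
   polynomials in the hyperplane coefficients, and they do not all vanish
   identically: the hyperplanes x_(j+1) = x_0 lead to the equation y_0^m = 1. *)

Lemma lead_coef_deriv (R : idomainType) (p : {poly R}) :
  lead_coef p *+ (size p).-1 != 0 -> lead_coef p^`() = lead_coef p *+ (size p).-1.
Proof.
case sp: (size p) => [|[|k]] /=; rewrite ?mulr0n ?eqxx // => hk.
have p_neq0 : p != 0 by rewrite -size_poly_eq0 sp.
have top : p^`()`_k = lead_coef p *+ k.+1 by rewrite coef_deriv lead_coefE sp.
have sp' : size p^`() = k.+1.
  apply/eqP; rewrite eqn_leq -ltnS -sp lt_size_deriv //=.
  by rewrite ltnNge; apply: contra hk; rewrite -top => /leq_sizeP->.
by rewrite lead_coefE sp' top.
Qed.

Lemma rmorph_resultant (A B : comNzRingType) (f : {rmorphism A -> B}) (p q : {poly A}) :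
    f (lead_coef p) != 0 -> f (lead_coef q) != 0 ->
  f (resultant p q) = resultant (map_poly f p) (map_poly f q).
Proof.
move=> nz_fp nz_fq; rewrite /resultant /Sylvester_mx !size_map_poly_id0 //.
rewrite -det_map_mx /= map_col_mx; congr (\det (col_mx _ _));
  by apply: map_lin1_mx => v; rewrite map_poly_rV rmorphM /= map_rVpoly.
Qed.

Section Reduction.
Variables (T : comNzRingType) (d : nat) (u : nat -> T).
Local Notation m := d.+1.
Local Notation n := (m * m)%N.

Definition rem_ord (i : nat) : 'I_m := Ordinal (ltn_pmod i (ltn0Sn d)).

Definition block_vec (y : 'I_m -> T) : 'rV[T]_n :=
  \row_(i < n) (u (i %/ m) * y (rem_ord i)).

Definition first_block (j : 'I_m) : 'I_n := widen_ord (leq_pmulr m (ltn0Sn d)) j.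

Definition torus : set 'rV[T]_n :=
  [set x | exists y, \prod_j y j = 1 /\ x = block_vec y].

Definition tail_col (y : 'I_m -> T) : 'cV[T]_d := \col_j y (lift ord0 j).

(* Coefficients of the hyperplanes of M at the points [block_vec y], as forms in y. *)
Definition fold_mx (M : 'M[T]_(d, n.+1)) : 'M[T]_(d, m) :=
  \matrix_(i, j) \sum_(l < n | rem_ord l == j) M i (widen_ord (leqnSn n) l) * u (l %/ m).

Definition offset_col (M : 'M[T]_(d, n.+1)) : 'cV[T]_d := \col_i M i ord_max.

Definition tail_mx M : 'M[T]_d := \matrix_(i, j) fold_mx M i (lift ord0 j).

Definition head_col M : 'cV[T]_d := \col_i fold_mx M i ord0.

Definition tail_det M := \det (tail_mx M).

Definition cramer_slope M : 'cV[T]_d := - (\adj (tail_mx M) *m head_col M).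

Definition cramer_offset M : 'cV[T]_d := - (\adj (tail_mx M) *m offset_col M).

Definition slope_prod M := \prod_(j < d) cramer_slope M j 0.

(* With y_j = (y_0 a_j + b_j) / delta for j > 0, where a = cramer_slope M,
   b = cramer_offset M and delta = tail_det M, delta^d (y_0 ... y_d - 1) is
   [elim_poly M] evaluated at y_0. *)
Definition elim_poly M : {poly T} :=
  'X * \prod_(j < d) (cramer_slope M j 0 *: 'X + (cramer_offset M j 0)%:P)
  - (tail_det M ^+ d)%:P.

Definition genericity M :=
  tail_det M * slope_prod M * resultant (elim_poly M) (elim_poly M)^`().

Lemma block_vec_first y j : u 0%N = 1 -> block_vec y 0 (first_block j) = y j.
Proof.
move=> u0; rewrite mxE /= divn_small ?ltn_ord // u0 mul1r; congr (y _).
by apply: val_inj; rewrite /= modn_small.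
Qed.

Lemma hyperplanes_block_vec M y :
  (forall i, hyperplane (row i M) (block_vec y)) <->
  tail_mx M *m tail_col y = - (y ord0 *: head_col M + offset_col M).
Proof.
have fold_eq i : \sum_(l < n) row i M 0 (widen_ord (leqnSn n) l) * block_vec y 0 l
    = \sum_j fold_mx M i j * y j.
  rewrite (partition_big (fun l : 'I_n => rem_ord l) xpredT) //=.
  apply: eq_bigr => j _; rewrite mxE mulr_suml; apply: eq_bigr => l /eqP <-.
  by rewrite !mxE mulrA.
have split_eq i : \sum_j fold_mx M i j * y j
    = (tail_mx M *m tail_col y) i 0 + y ord0 * head_col M i 0.
  rewrite big_ord_recl addrC !mxE mulrC; congr (_ + _).
  by apply: eq_bigr => j _; rewrite !mxE.
split=> [hyp | sol i].
  apply/matrixP => i k; rewrite (ord1 k).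
  move: (hyp i); rewrite /hyperplane /= fold_eq split_eq -addrA => /eqP.
  by rewrite addr_eq0 => /eqP ->; rewrite !mxE.
by rewrite /hyperplane /= fold_eq split_eq sol !mxE -addrA addNr.
Qed.

Lemma fold_mx_first_block (M : 'M[T]_(d, n.+1)) : u 0%N = 1 ->
    (forall i (l : 'I_n), (m <= l)%N -> M i (widen_ord (leqnSn n) l) = 0) ->
  forall i j, fold_mx M i j = M i (widen_ord (leqnSn n) (first_block j)).
Proof.
move=> u0 M_first i j; rewrite mxE (bigD1 (first_block j)) /=; last first.
  by apply/eqP/val_inj; rewrite /= modn_small.
rewrite divn_small ?ltn_ord // u0 mulr1 big1 ?addr0 // => l /andP [/eqP l_j l_neq].
have [l_small | l_big] := ltnP l m; last by rewrite M_first // mul0r.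
move: l_neq; suff -> : l = first_block j by rewrite eqxx.
by apply: val_inj; rewrite /= -l_j /= modn_small.
Qed.

End Reduction.

Lemma elim_poly_lead (T : idomainType) (d : nat) (u : nat -> T)
    (M : 'M[T]_(d, (d.+1 * d.+1).+1)) :
    slope_prod u M != 0 ->
  size (elim_poly u M) = d.+2 /\ lead_coef (elim_poly u M) = slope_prod u M.
Proof.
set a := cramer_slope u M; set b := cramer_offset u M; move=> a_neq0.
have aj_neq0 j : a j 0 != 0.
  by apply: contraNneq a_neq0 => aj0; rewrite /slope_prod (bigD1 j) //= aj0 mul0r.
have size_line j : size (a j 0 *: 'X + (b j 0)%:P) = 2%N.
  by rewrite size_polyDl ?size_scale ?size_polyX // size_polyC; case: eqP.
have lead_line j : lead_coef (a j 0 *: 'X + (b j 0)%:P) = a j 0.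
  rewrite lead_coefDl ?lead_coefZ ?lead_coefX ?mulr1 //.
  by rewrite size_scale // size_polyX size_polyC; case: eqP.
pose P := \prod_(j < d) (a j 0 *: 'X + (b j 0)%:P).
have sizeP : size P = d.+1.
  rewrite size_prod => [|j _]; last by rewrite -size_poly_eq0 size_line.
  rewrite (eq_bigr (fun _ => 2%N)) ?sum_nat_const => [|j _]; last exact: size_line.
  by rewrite card_ord; lia.
have sizeXP : size ('X * P) = d.+2.
  by rewrite mulrC size_mulX -?size_poly_eq0 sizeP.
have lt_c : (size (- (tail_det u M ^+ d)%:P)%R < size ('X * P)%R)%N.
  by rewrite size_polyN sizeXP (leq_ltn_trans (size_polyC_leq1 _)).
rewrite /elim_poly -/P size_polyDl // sizeXP lead_coefDl // mulrC lead_coefMX.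
by rewrite lead_coef_prod; split=> //; apply: eq_bigr => j _; rewrite lead_line.
Qed.

Section MapReduction.
Variables (A B : comNzRingType) (f : {rmorphism A -> B}).
Variables (d : nat) (uA : nat -> A) (uB : nat -> B).
Hypothesis uB_map : forall k, uB k = f (uA k).
Variable M : 'M[A]_(d, (d.+1 * d.+1).+1).
Local Notation fM := (map_mx f M).

Lemma fold_mx_map : fold_mx uB fM = map_mx f (fold_mx uA M).
Proof.
apply/matrixP=> i j; rewrite !mxE rmorph_sum.
by apply: eq_bigr => k _; rewrite rmorphM uB_map mxE.
Qed.

Lemma offset_col_map : offset_col fM = map_mx f (offset_col M).
Proof. by apply/matrixP=> i j; rewrite !mxE. Qed.

Lemma tail_mx_map : tail_mx uB fM = map_mx f (tail_mx uA M).
Proof. by apply/matrixP=> i j; rewrite mxE fold_mx_map !mxE. Qed.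

Lemma head_col_map : head_col uB fM = map_mx f (head_col uA M).
Proof. by apply/matrixP=> i j; rewrite mxE fold_mx_map !mxE. Qed.

Lemma tail_det_map : tail_det uB fM = f (tail_det uA M).
Proof. by rewrite /tail_det tail_mx_map det_map_mx. Qed.

Lemma cramer_slope_map : cramer_slope uB fM = map_mx f (cramer_slope uA M).
Proof. by rewrite /cramer_slope map_mxN map_mxM map_mx_adj tail_mx_map head_col_map. Qed.

Lemma cramer_offset_map : cramer_offset uB fM = map_mx f (cramer_offset uA M).
Proof.
by rewrite /cramer_offset map_mxN map_mxM map_mx_adj tail_mx_map offset_col_map.
Qed.

Lemma slope_prod_map : slope_prod uB fM = f (slope_prod uA M).
Proof.
by rewrite /slope_prod rmorph_prod; apply: eq_bigr => j _; rewrite cramer_slope_map mxE.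
Qed.

Lemma elim_poly_map : elim_poly uB fM = map_poly f (elim_poly uA M).
Proof.
rewrite /elim_poly rmorphB rmorphM /= map_polyX rmorph_prod /= map_polyC /=.
rewrite rmorphXn tail_det_map; congr (_ * _ - _); last by rewrite rmorphXn polyC_exp.
apply: eq_bigr => j _; rewrite rmorphD /= map_polyZ map_polyX map_polyC /=.
by rewrite cramer_slope_map cramer_offset_map !mxE.
Qed.

End MapReduction.

Lemma genericity_map (A B : idomainType) (f : {rmorphism A -> B}) (d : nat)
    (uA : nat -> A) (uB : nat -> B) (M : 'M[A]_(d, (d.+1 * d.+1).+1)) :
    (forall k, uB k = f (uA k)) -> d.+1%:R != 0 :> B ->
  f (genericity uA M) = genericity uB (map_mx f M).
Proof.
move=> uB_map m_neq0; have fS := slope_prod_map uB_map M.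
have [fS0 | fS_neq0] := eqVneq (slope_prod uB (map_mx f M)) 0.
  by rewrite /genericity !rmorphM /= -fS fS0 !(mulr0, mul0r).
have fSm_neq0 : f (slope_prod uA M *+ d.+1) != 0.
  by rewrite rmorphMn -fS -mulr_natr mulf_neq0.
have Sm_neq0 : slope_prod uA M *+ d.+1 != 0.
  by apply: contraNneq fSm_neq0 => ->; rewrite rmorph0.
have S_neq0 : slope_prod uA M != 0 by apply: contraNneq Sm_neq0 => ->; rewrite mul0rn.
have [sizeG leadG] := elim_poly_lead S_neq0.
have leadG' : lead_coef (elim_poly uA M)^`() = slope_prod uA M *+ d.+1.
  by rewrite lead_coef_deriv sizeG leadG.
rewrite /genericity !rmorphM /= rmorph_resultant ?leadG ?leadG' -?fS //.
by rewrite (tail_det_map uB_map) (elim_poly_map uB_map) deriv_map.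
Qed.

Lemma resultant_deriv_separable (R : idomainType) (p : {poly R}) :
  p != 0 -> resultant p p^`() != 0 -> separable_poly p.
Proof.
move=> p_neq0; rewrite resultant_eq0 -leqNgt unlock /coprimep.
have : gcdp p p^`() != 0 by rewrite gcdp_eq0 negb_and p_neq0.
by rewrite -size_poly_eq0; case: (size _) => [|[|]].
Qed.

Lemma separable_roots (K : closedFieldType) (p : {poly K}) :
  separable_poly p ->
  exists r, [/\ uniq r, size r = (size p).-1 & forall z, root p z = (z \in r)].
Proof.
move=> sep_p; have [r def_p] := closed_field_poly_normal p.
have p_neq0 : p != 0.
  by apply: contraTneq sep_p => ->; rewrite unlock /coprimep deriv0 gcd0p size_poly0.
have lc_neq0 : lead_coef p != 0 by rewrite lead_coef_eq0.
exists r; split.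
- by move: sep_p; rewrite def_p (eqp_separable (eqp_scale _ lc_neq0)) separable_prod_XsubC.
- by rewrite def_p size_scale // size_prod_XsubC.
- by move=> z; rewrite def_p rootZ // root_prod_XsubC.
Qed.

Section Cramer.
Variables (F : fieldType) (d : nat) (u : nat -> F).
Variable M : 'M[F]_(d, (d.+1 * d.+1).+1).
Hypothesis det_neq0 : tail_det u M != 0.
Local Notation delta := (tail_det u M).
Local Notation a := (cramer_slope u M).
Local Notation b := (cramer_offset u M).

Definition cramer_pt (z : F) : 'I_d.+1 -> F := fun j =>
  if unlift ord0 j is Some k then delta^-1 * (z * a k 0 + b k 0) else z.

Lemma cramer_pt0 z : cramer_pt z ord0 = z.
Proof. by rewrite /cramer_pt unlift_none. Qed.

Lemma cramer_ptS z k : cramer_pt z (lift ord0 k) = delta^-1 * (z * a k 0 + b k 0).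
Proof. by rewrite /cramer_pt liftK. Qed.

Lemma tail_systemP y :
  tail_mx u M *m tail_col y = - (y ord0 *: head_col u M + offset_col M) <->
  y =1 cramer_pt (y ord0).
Proof.
have adj_rhs : y ord0 *: a + b =
    \adj (tail_mx u M) *m - (y ord0 *: head_col u M + offset_col M).
  by rewrite mulmxN mulmxDr -scalemxAr opprD scalerN.
have solved : tail_mx u M *m tail_col y = - (y ord0 *: head_col u M + offset_col M) <->
    delta *: tail_col y = y ord0 *: a + b.
  split=> h; first by rewrite adj_rhs -h mulmxA mul_adj_mx mul_scalar_mx.
  apply: (scalerI det_neq0).
  by rewrite scalemxAr h adj_rhs mulmxA mul_mx_adj mul_scalar_mx.
rewrite solved; split=> [/matrixP h j | h].
  case: (unliftP ord0 j) => [k -> | ->]; last by rewrite cramer_pt0.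
  by rewrite cramer_ptS; move: (h k 0); rewrite !mxE => <-; rewrite mulKf // mulrC.
apply/matrixP => k l; rewrite (ord1 l) !mxE h cramer_ptS mulVKf //.
by rewrite !mxE mulrC.
Qed.

Lemma prod_cramer_pt z : \prod_j cramer_pt z j = 1 <-> root (elim_poly u M) z.
Proof.
have -> : \prod_j cramer_pt z j = delta^-1 ^+ d * ((elim_poly u M).[z] + delta ^+ d).
  rewrite big_ord_recl cramer_pt0; under eq_bigr do rewrite cramer_ptS.
  rewrite big_split /= prodr_const card_ord /elim_poly !hornerE horner_prod addrNK.
  under [in RHS]eq_bigr do rewrite !hornerE mulrC.
  by rewrite mulrCA mulrA.
have deltad_neq0 : delta ^+ d != 0 by rewrite expf_neq0.
rewrite exprVn /root; split=> [|/eqP ->].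
  move/(congr1 (fun t => delta ^+ d * t)); rewrite mulVKf // mulr1 => /eqP.
  by rewrite -subr_eq0 addrK.
by rewrite add0r mulVf.
Qed.

End Cramer.

Lemma torus_hyperplanes_count (K : closedFieldType) (d : nat) (u : nat -> K)
    (M : 'M[K]_(d, (d.+1 * d.+1).+1)) :
    u 0%N = 1 -> genericity u M != 0 ->
  has_exactly (torus u `&` [set x | forall j : 'I_d, hyperplane (row j M) x]) d.+1.
Proof.
move=> u0; rewrite /genericity !mulf_eq0 !negb_or.
move=> /andP [/andP [det_neq0 S_neq0] res_neq0].
have [sizeG _] := elim_poly_lead S_neq0.
have G_neq0 : elim_poly u M != 0 by rewrite -size_poly_eq0 sizeG.
have [r [uniq_r size_r rootG]] :=
  separable_roots (resultant_deriv_separable G_neq0 res_neq0).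
exists [seq block_vec u (cramer_pt u M z) | z <- r]; split.
- rewrite map_inj_in_uniq // => z1 z2 _ _ /rowP/(_ (first_block ord0)).
  by rewrite !block_vec_first // !cramer_pt0.
- by rewrite size_map size_r sizeG.
move=> x; split.
  move=> [[y [prod_y ->]] /hyperplanes_block_vec /(tail_systemP det_neq0) ey].
  have y0_in_r : y ord0 \in r.
    rewrite -rootG; apply/(prod_cramer_pt det_neq0); rewrite -[RHS]prod_y.
    by apply: eq_bigr => j _; rewrite -ey.
  by rewrite (funext ey); exact: map_f.
move=> /mapP [z zr ->]; split.
  exists (cramer_pt u M z); split=> //.
  by apply/(prod_cramer_pt det_neq0); rewrite rootG.
by apply/hyperplanes_block_vec/(tail_systemP det_neq0) => j; rewrite cramer_pt0.
Qed.

Section Witness.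
Variables (F : idomainType) (d : nat) (u : nat -> F).
Hypothesis u0 : u 0%N = 1.
Local Notation m := d.+1.
Local Notation n := (m * m)%N.

(* The hyperplanes x_(i+1) = x_0. *)
Definition witness_mx : 'M[F]_(d, n.+1) := \matrix_(i, j)
  if (j < m)%N then (if j == 0 :> nat then -1 else if j == i.+1 :> nat then 1 else 0)
  else 0.

Lemma witness_mx_first i (l : 'I_n) :
  (m <= l)%N -> witness_mx i (widen_ord (leqnSn n) l) = 0.
Proof. by move=> m_le_l; rewrite mxE /= ltnNge m_le_l. Qed.

Lemma tail_mx_witness : tail_mx u witness_mx = 1%:M.
Proof.
apply/matrixP => i j; rewrite mxE fold_mx_first_block //; last exact: witness_mx_first.
rewrite !mxE /= /bump leq0n add1n ltnS ltn_ord eqSS eq_sym.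
by rewrite val_eqE; case: (i == j).
Qed.

Lemma head_col_witness : head_col u witness_mx = const_mx (-1).
Proof.
by apply/matrixP => i j; rewrite mxE fold_mx_first_block ?mxE //; exact: witness_mx_first.
Qed.

Lemma offset_col_witness : offset_col witness_mx = 0.
Proof. by apply/matrixP => i j; rewrite !mxE /= ltnNge leq_pmulr. Qed.

Lemma cramer_slope_witness j : cramer_slope u witness_mx j 0 = 1.
Proof.
by rewrite /cramer_slope tail_mx_witness adj1 mul1mx head_col_witness !mxE opprK.
Qed.

Lemma elim_poly_witness : elim_poly u witness_mx = 'X^m - 1.
Proof.
rewrite /elim_poly /tail_det tail_mx_witness det1 expr1n.
under eq_bigr do rewrite cramer_slope_witness /cramer_offset tail_mx_witness adj1
  mul1mx offset_col_witness oppr0 mxE scale1r addr0.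
by rewrite prodr_const card_ord exprS.
Qed.

Lemma genericity_witness : m%:R != 0 :> F -> genericity u witness_mx != 0.
Proof.
move=> m_neq0; rewrite /genericity /tail_det tail_mx_witness det1 mul1r.
rewrite /slope_prod big1 => [|j _]; last exact: cramer_slope_witness.
rewrite mul1r elim_poly_witness resultant_eq0 -leqNgt.
by move: (separable_Xn_sub_1 m_neq0); rewrite unlock /coprimep => /eqP ->.
Qed.

End Witness.

Section GenericHyperplanes.
Variables (K : numClosedFieldType) (d : nat).
Local Notation n := (d.+1 * d.+1)%N.

Definition generic_mx : 'M[{mpoly K[d * n.+1]}]_(d, n.+1) :=
  \matrix_(i, j) 'X_(mxvec_index i j).

Lemma meval_generic_mx (M : 'M[K]_(d, n.+1)) :
  map_mx (meval (fun l => mxvec M 0 l)) generic_mx = M.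
Proof. by apply/matrixP => i j; rewrite !mxE mevalXU mxvecE. Qed.

Theorem degree_is_torus (u : nat -> K) : u 0%N = 1 -> degree_is (@torus _ d u) d d.+1.
Proof.
move=> u0; have m_neq0 : d.+1%:R != 0 :> K by rewrite pnatr_eq0.
pose P := genericity (fun k => (u k)%:MP) generic_mx.
have eval_P M : meval (fun l => mxvec M 0 l) P = genericity u M.
  rewrite (@genericity_map _ _ (meval _) _ _ u) ?meval_generic_mx //.
  by move=> k /=; rewrite mevalC.
exists P; split=> [|M]; last by rewrite eval_P; exact: torus_hyperplanes_count.
by apply/eqP => P0; move: (genericity_witness u0 m_neq0); rewrite -eval_P P0 meval0 eqxx.
Qed.

End GenericHyperplanes.

Section MonomialParametrization.
Variables (F : fieldType) (d : nat).

Definition monomial_pt (t : 'I_d -> F) : 'I_d.+1 -> F := fun j =>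
  if (j < d)%N then \prod_(l < d | (l <= j)%N) t l else \prod_(l < d) t l ^- (d - l).

Lemma prod_monomial_pt t : (forall l, t l != 0) -> \prod_j monomial_pt t j = 1.
Proof.
move=> t_neq0; rewrite big_ord_recr /= /monomial_pt /= ltnn.
under eq_bigr do rewrite /= ltn_ord.
rewrite (exchange_big_dep xpredT) //=.
under eq_bigr => l _ do rewrite -(big_geq_mkord l d xpredT (fun=> t l)) prodr_const_nat.
by rewrite -big_split /= big1 // => l _; rewrite mulfV // expf_neq0.
Qed.

Lemma monomial_pt_onto (y : 'I_d.+1 -> F) : \prod_j y j = 1 ->
  exists2 t : 'I_d -> F, (forall l, t l != 0) & monomial_pt t =1 y.
Proof.
move=> prod_y.
have y_neq0 j : y j != 0.
  by apply: contra_eq_neq prod_y => yj0; rewrite (bigD1 j) //= yj0 mul0r eq_sym oner_neq0.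
pose a k := if k is k'.+1 then y (inord k') else 1.
have a_neq0 k : a k != 0 by case: k => [|k] /=; rewrite ?oner_neq0.
pose t (l : 'I_d) := a l.+1 / a l.
have t_neq0 l : t l != 0 by rewrite mulf_neq0 ?invr_eq0.
have t_partial (j : 'I_d.+1) : (j < d)%N -> monomial_pt t j = y j.
  move=> j_lt_d; rewrite /monomial_pt j_lt_d.
  transitivity (\prod_(0 <= l < j.+1) (a l.+1 / a l)).
    by rewrite (big_nat_widen _ _ _ _ _ j_lt_d) big_mkord.
  by rewrite telescope_prodf // /= divr1 inord_val.
exists t => // j; have [j_lt_d | ] := ltnP j d; first exact: t_partial.
rewrite leq_eqVlt ltnNge -ltnS ltn_ord orbF => /eqP j_eq.
have -> : j = ord_max by apply: val_inj.
have : \prod_j monomial_pt t j = \prod_j y j by rewrite prod_monomial_pt.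
rewrite !big_ord_recr /=.
rewrite (eq_bigr (fun i => y (widen_ord (leqnSn d) i))) => [|i _]; last first.
  by apply: t_partial; rewrite /= ltn_ord.
by apply: mulfI; rewrite prodf_seq_neq0; apply/allP => i _; exact: y_neq0.
Qed.

End MonomialParametrization.

Lemma zariski_closure_torus (T : comNzRingType) (d : nat) (u : nat -> T) :
  u 0%N = 1 -> zariski_closure (@torus _ d u) = torus u.
Proof.
move=> u0; apply/funext => x; apply/propext; split=> [x_cl | x_tor p]; last first.
  by apply; exact: x_tor.
pose y j := x 0 (first_block j).
have x_block i : x 0 i = u (i %/ d.+1)%N * y (rem_ord d i).
  pose p : {mpoly T[d.+1 * d.+1]} :=
    'X_i - u (i %/ d.+1)%N *: 'X_(first_block (rem_ord d i)).
  have : meval (fun l => x 0 l) p = 0.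
    apply: x_cl => _ [z [_ ->]].
    by rewrite mevalB mevalZ !mevalXU block_vec_first // mxE subrr.
  by rewrite mevalB mevalZ !mevalXU => /eqP; rewrite subr_eq0 => /eqP.
have prod_y : \prod_j y j = 1.
  pose p : {mpoly T[d.+1 * d.+1]} := \prod_(j < d.+1) 'X_(first_block j) - 1.
  have : meval (fun l => x 0 l) p = 0.
    apply: x_cl => _ [z [prod_z ->]].
    rewrite mevalB rmorph_prod meval1 /=.
    by under eq_bigr do rewrite mevalXU block_vec_first //; rewrite prod_z subrr.
  rewrite mevalB rmorph_prod meval1 /=; under eq_bigr do rewrite mevalXU.
  by move/eqP; rewrite subr_eq0 => /eqP.
by exists y; split=> //; apply/matrixP => a i; rewrite (ord1 a) x_block mxE.
Qed.

Lemma root_u0 (R : realType) (m : nat) : root_u R m 0 = 1.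
Proof. by rewrite /root_u mulr0 mul0r cos0 sin0. Qed.

Lemma xpt_block_vec (R : realType) (d : nat) (t : 'I_d -> R[i]) :
  @xpt R d.+1 t = block_vec (root_u R d.+1) (monomial_pt t).
Proof. by apply/matrixP => a i; rewrite !mxE /monomial_pt /=; case: ifP. Qed.

Local Open Scope classical_set_scope.

Lemma range_xpt (R : realType) (d : nat) :
  [set x | exists t : 'I_d -> R[i], (forall l, t l != 0) /\ x = @xpt R d.+1 t]
  = torus (root_u R d.+1).
Proof.
apply/funext => x; apply/propext; split=> [[t [t_neq0 ->]] | [y [prod_y ->]]].
  by exists (monomial_pt t); rewrite xpt_block_vec prod_monomial_pt.
have [t t_neq0 ty] := monomial_pt_onto prod_y.
by exists t; split=> //; rewrite xpt_block_vec (funext ty).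
Qed.

Theorem proposition3 (R : realType) (m : nat) :
  (2 <= m)%N -> degree_is (@S_m R m) m.-1 m.
Proof.
case: m => [//|d] _; rewrite /S_m range_xpt zariski_closure_torus ?root_u0 //.
exact/degree_is_torus/root_u0.
Qed.
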